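(* For every integer $t\ge 1$ and every integer $r\ge 3$, $\mathrm{ex}(n,K_r,F_t)=O(n)$ as $n\to\infty$.
   Context: For graphs $H$ and $F$, $\mathrm{ex}(n,H,F)$ is the maximum number of (not necessarily induced) copies of $H$ in an $n$-vertex graph containing no subgraph isomorphic to $F$. The $t$-fan $F_t$ has vertices $u,v_1,\dots,v_t,w_1,\dots,w_t$ and edges $uv_i,uw_i,v_iw_i$ for $1\le i\le t$ ($t$ triangles sharing one vertex). $K_r$ is the complete graph on $r$ vertices. *)

From mathcomp Require Import all_boot.
Set Implicit Arguments. Unset Strict Implicit. Unset Printing Implicit Defensive.

Definition simple_graph (T : finType) (e : rel T) : Prop :=
  symmetric e /\ irreflexive e.

(* Vertex type of the t-fan F_t: None = centre u,
   Some (i, false) = v_i, Some (i, true) = w_i. *)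
Definition fan_vertex (t : nat) : finType := option ('I_t * bool).

(* Edges of F_t: u v_i, u w_i, v_i w_i. *)
Definition fan_edge (t : nat) : rel (fan_vertex t) :=
  fun x y =>
    match x, y with
    | None, Some _ => true
    | Some _, None => true
    | Some (i, b), Some (j, c) => (i == j) && (b != c)
    | None, None => false
    end.

Definition contains_fan (T : finType) (e : rel T) (t : nat) : Prop :=
  exists f : fan_vertex t -> T,
    injective f /\ forall x y, fan_edge x y -> e (f x) (f y).

Definition is_clique (T : finType) (e : rel T) (S : {set T}) : bool :=
  [forall x in S, forall y in S, (x != y) ==> e x y].

(* Number of (not necessarily induced) copies of K_r in G:
   a copy of K_r is determined by its r-element vertex set, which must be a clique. *)
Definition num_Kr (T : finType) (e : rel T) (r : nat) : nat :=
  #|[set S : {set T} | (#|S| == r) && is_clique e S]|.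

From mathcomp Require Import all_boot zify.
Set Implicit Arguments. Unset Strict Implicit. Unset Printing Implicit Defensive.

(* Fix a vertex a of an F_t-free graph. A greedy matching in the link of a
   (the graph induced on the neighbourhood of a) has fewer than t edges, since
   its edges together with a form a fan; if it is maximal, its at most 2(t-1)
   endpoints form a set S a meeting every triangle through a outside a.
   Now let Q be an r-clique, r >= 3. For every a in Q, all of Q but a and at
   most one other vertex lies in S a; a short case analysis then finds a in Q
   and b in S a such that Q is contained in a |: (S a :|: S b). Hence every
   r-clique is a subset of one of at most n * 2(t-1) sets of size at most
   4t - 3, which bounds their number linearly in n. *)

Fixpoint endpoints (T : Type) (s : seq (T * T)) : seq T :=
  if s is p :: s' then p.1 :: p.2 :: endpoints s' else [::].

Lemma size_endpoints (T : Type) (s : seq (T * T)) :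
  size (endpoints s) = (size s).*2.
Proof. by elim: s => //= p s ->; rewrite doubleS. Qed.

Lemma nth_endpoints (T : Type) (x0 : T) (s : seq (T * T)) i (b : bool) :
  i < size s ->
  nth x0 (endpoints s) (i.*2 + b) = if b then (nth (x0, x0) s i).2
                                    else (nth (x0, x0) s i).1.
Proof. by elim: s i b => [|p s IH] [|i] b //=; [case: b | apply: IH]. Qed.

Section LinkMatching.

Variables (T : finType) (e : rel T) (a : T).
Hypothesis e_simple : simple_graph e.

Definition link_matching (s : seq (T * T)) : bool :=
  all (fun p => [&& e a p.1, e a p.2 & e p.1 p.2]) s && uniq (endpoints s).

Definition meets_link_edges (S : {set T}) : Prop :=
  forall y z, e a y -> e a z -> e y z -> (y \in S) || (z \in S).

Lemma link_matching_adj s y :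
  link_matching s -> y \in endpoints s -> e a y.
Proof.
case/andP=> /allP adj _ /=; elim: s adj => //= p s IH adj.
have /and3P[ap1 ap2 _] := adj p (mem_head p s).
rewrite !inE => /or3P[/eqP-> | /eqP-> | ys] //.
by apply: IH ys => q qs; apply: adj; rewrite inE qs orbT.
Qed.

Lemma link_matching_cons s y z :
  link_matching s -> e a y -> e a z -> e y z ->
  y \notin endpoints s -> z \notin endpoints s -> link_matching ((y, z) :: s).
Proof.
case/andP=> adj uniq_s ay az yz ys zs.
rewrite /link_matching /= ay az yz adj uniq_s inE negb_or ys zs !andbT /=.
by apply: contraTneq yz => ->; rewrite (proj2 e_simple).
Qed.

(* The i-th matching edge gives the blade v_i w_i; a is the centre. *)
Lemma fan_of_link_matching t s :
  link_matching s -> t <= size s -> contains_fan e t.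
Proof.
move=> ms t_le_s; have [e_sym e_irr] := e_simple.
pose f (v : fan_vertex t) := if v is Some (i, b) then
  nth a (endpoints s) ((val i).*2 + b) else a.
have lt_idx (i : 'I_t) (b : bool) : (val i).*2 + b < size (endpoints s).
  by rewrite size_endpoints; have := ltn_ord i; case: b => /=; lia.
have f_adj (i : 'I_t) (b : bool) : e a (f (Some (i, b))).
  exact/(link_matching_adj ms)/mem_nth/lt_idx.
have f_neq (i : 'I_t) (b : bool) : f (Some (i, b)) != a.
  by apply: contraTneq (f_adj i b) => ->; rewrite e_irr.
exists f; split.
- have uniq_s : uniq (endpoints s) by case/andP: ms.
  move=> [[i b]|] [[j c]|] //=; last 2 first.
  + by move=> fa; move: (f_neq i b); rewrite /= fa eqxx.
  + by move=> af; move: (f_neq j c); rewrite /= -af eqxx.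
  move/eqP; rewrite nth_uniq ?lt_idx // => /eqP idx_eq.
  have -> : b = c by case: b c idx_eq => [] [] /=; lia.
  by congr (Some (_, _)); apply: val_inj => /=; case: b c idx_eq => [] [] /=; lia.
- move=> [[i b]|] [[j c]|] //= => [/andP[/eqP<- bc] | _ | _]; last 2 first.
  + by rewrite e_sym; apply: f_adj.
  + exact: f_adj.
  have i_lt_s : val i < size s := leq_trans (ltn_ord i) t_le_s.
  rewrite !nth_endpoints //.
  case/andP: ms => /allP/(_ _ (mem_nth (a, a) i_lt_s))/and3P[_ _ blade] _.
  by case: b c bc => [] [] //= _; rewrite e_sym.
Qed.

Lemma link_cover_of_fan_free t :
  ~ contains_fan e t -> exists2 S : {set T}, #|S| <= (t.-1).*2 & meets_link_edges S.
Proof.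
move=> fan_free.
have small s : link_matching s -> size s < t.
  by move=> ms; rewrite ltnNge; apply/negP => /(fan_of_link_matching ms).
suff [s ms cover] :
    exists2 s, link_matching s & meets_link_edges [set y in endpoints s].
  exists [set y in endpoints s] => //; rewrite cardsE.
  by apply: leq_trans (card_size _) _; rewrite size_endpoints; have := small s ms; lia.
suff: forall n s, t - size s <= n -> link_matching s ->
    exists2 s, link_matching s & meets_link_edges [set y in endpoints s].
  by move/(_ t [::]); rewrite subn0; apply.
elim=> [|n IH] s le_n ms; first by have := small s ms; lia.
have [/existsP[y /existsP[z]] | no_ext] := boolP [exists y, exists z,
    [&& e a y, e a z, e y z, y \notin endpoints s & z \notin endpoints s]].
  case/and5P=> ay az yz ys zs; apply: (IH ((y, z) :: s)); first by rewrite /=; lia.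
  exact: link_matching_cons.
exists s => // y z ay az yz; rewrite !inE.
move/existsPn/(_ y)/existsPn/(_ z): no_ext; rewrite ay az yz /=.
by case/nandP=> /negPn->; rewrite ?orbT.
Qed.

End LinkMatching.

Section CliquePairCover.

Variables (T : finType) (S : T -> {set T}) (Q : {set T}).
Hypothesis Q_gt2 : 2 < #|Q|.
Hypothesis S_meets : forall a y z, a \in Q -> y \in Q -> z \in Q ->
  a != y -> a != z -> y != z -> (y \in S a) || (z \in S a).

Lemma exists_third a y : exists2 b, b \in Q & (b != a) && (b != y).
Proof.
have [b /and3P[bQ ba bY] | none] := pickP [pred b | [&& b \in Q, b != a & b != y]].
  by exists b; rewrite ?ba.
suff : #|Q| <= 2 by rewrite leqNgt Q_gt2.
apply: leq_trans (_ : #|[set a; y]| <= 2); last by rewrite cards2; case: (a != y).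
apply/subset_leq_card/subsetP => b bQ; move: (none b); rewrite /= bQ !inE.
by case: (b == a); case: (b == y).
Qed.

Lemma sub_S_but_one a y :
  a \in Q -> y \in Q -> y != a -> y \notin S a -> Q \subset a |: (y |: S a).
Proof.
move=> aQ yQ ya yS; apply/subsetP => z zQ; rewrite !inE.
have [-> // | za] := eqVneq z a.
have [-> // | zy] := eqVneq z y.
by move: (S_meets aQ yQ zQ); rewrite (negbTE yS); apply; rewrite eq_sym.
Qed.

Lemma mem_S_of_sub a y b :
  Q \subset a |: (y |: S a) -> b \in Q -> b != a -> b != y -> b \in S a.
Proof.
by move/subsetP=> sub bQ ba bY; move: (sub b bQ); rewrite !inE (negbTE ba) (negbTE bY).
Qed.

Lemma sub_pair_cover a y b :
  Q \subset a |: (y |: S a) -> y \in S b -> Q \subset a |: (S a :|: S b).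
Proof.
move/subsetP=> sub ySb; apply/subsetP => z /sub; rewrite !inE.
by case/or3P=> [-> | /eqP-> | ->] //=; rewrite ?ySb ?orbT.
Qed.

Lemma clique_pair_cover :
  exists a b, b \in S a /\ Q \subset a |: (S a :|: S b).
Proof.
have [a aQ] : exists a, a \in Q by apply/card_gt0P; lia.
have [subA | /subsetPn[y yQ]] := boolP (Q \subset a |: S a).
  have [b bQ /andP[ba _]] := exists_third a a.
  exists a, b; split; first by move/subsetP/(_ b bQ): subA; rewrite !inE (negbTE ba).
  by apply: subset_trans subA _; apply: setUS; apply: subsetUl.
rewrite !inE negb_or => /andP[ya yS].
have subA := sub_S_but_one aQ yQ ya yS.
have [b bQ /andP[ba bY]] := exists_third a y.
have bS := mem_S_of_sub subA bQ ba bY.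
have [ySb | ySb] := boolP (y \in S b).
  by exists a, b; split; last exact: sub_pair_cover ySb.
have [subY | /subsetPn[w wQ]] := boolP (Q \subset y |: S y).
  exists y, b; split; first by move/subsetP/(_ b bQ): subY; rewrite !inE (negbTE bY).
  by apply: subset_trans subY _; apply: setUS; apply: subsetUl.
rewrite !inE negb_or => /andP[wy wS].
have subY := sub_S_but_one yQ wQ wy wS.
pose c := if w == a then b else a.
have [cQ cy cw ySc] : [/\ c \in Q, c != y, c != w & y \notin S c].
  by rewrite /c; case: eqVneq => [-> | wa]; split; rewrite // eq_sym.
have wSc : w \in S c.
  by move: (S_meets cQ yQ wQ cy cw); rewrite (negbTE ySc); apply; rewrite eq_sym.
exists y, c; split; first exact: mem_S_of_sub subY cQ cy cw.
exact: sub_pair_cover wSc.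
Qed.

End CliquePairCover.

Lemma card_bigcup_le (I T : finType) (P : pred I) (F : I -> {set T}) :
  #|\bigcup_(i | P i) F i| <= \sum_(i | P i) #|F i|.
Proof.
elim/big_rec2: _ => [|i X n _ IH]; first by rewrite cards0.
by apply: leq_trans (leq_card_setU _ _) _; rewrite leq_add2l.
Qed.

Lemma card_pair_covered_le (T : finType) (S : T -> {set T}) k (A : {set {set T}}) :
  (forall a, #|S a| <= k) ->
  (forall Q, Q \in A -> exists a b, b \in S a /\ Q \subset a |: (S a :|: S b)) ->
  #|A| <= #|T| * (k * 2 ^ (2 * k).+1).
Proof.
move=> S_small covered.
have sub_union : A \subset \bigcup_a \bigcup_(b in S a) powerset (a |: (S a :|: S b)).
  apply/subsetP => Q /covered[a [b [bS Qsub]]].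
  by apply/bigcupP; exists a => //; apply/bigcupP; exists b; rewrite ?powersetE.
apply: leq_trans (subset_leq_card sub_union) _.
apply: leq_trans (card_bigcup_le _ _) _; rewrite -sum_nat_const.
apply: leq_sum => a _; apply: leq_trans (card_bigcup_le _ _) _.
apply: (@leq_trans (\sum_(b in S a) 2 ^ (2 * k).+1)); last first.
  by rewrite sum_nat_const leq_mul2r S_small orbT.
apply: leq_sum => b _; rewrite card_powerset leq_pexp2l //.
rewrite cardsU1 -add1n leq_add ?leq_b1 //.
by apply: leq_trans (leq_card_setU _ _) _; rewrite mul2n -addnn leq_add.
Qed.

Lemma clique_adj (T : finType) (e : rel T) (Q : {set T}) x y :
  is_clique e Q -> x \in Q -> y \in Q -> x != y -> e x y.
Proof.
by move=> /forall_inP/(_ x) cl xQ yQ xy; move/forall_inP/(_ y yQ): (cl xQ); rewrite xy.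
Qed.

Theorem proposition3 :
  forall t r : nat, 1 <= t -> 3 <= r ->
  exists C N : nat, forall n : nat, N <= n ->
    forall (T : finType) (e : rel T),
      #|T| = n -> simple_graph e -> ~ contains_fan e t ->
      num_Kr e r <= C * n.
Proof.
move=> t r _ r_gt2; set k := (t.-1).*2.
exists (k * 2 ^ (2 * k).+1), 0 => n _ T e <- e_simple fan_free.
have /fin_all_exists2[S S_small S_meets] a :
    exists2 S : {set T}, #|S| <= k & meets_link_edges e a S.
  exact: link_cover_of_fan_free.
rewrite mulnC; apply: card_pair_covered_le S_small _ => Q.
rewrite inE => /andP[/eqP card_Q Q_clique].
apply: clique_pair_cover; first by rewrite card_Q.
by move=> a y z aQ yQ zQ ay az yz; apply: S_meets; apply: clique_adj Q_clique _ _ _.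
Qed.
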